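(* Let $A,B\in M_\ell(F)$ commute, let $F_A$ be an idempotent associated with $A$, and let $Q''_L=\mathrm{CSS}(A,(H_Z)_L)$ with $(H_Z)_L=(B(I-F_A))^T$. Suppose $A$ is block-diagonal, i.e., there is a partition of the index set $\{1,\dots,\ell\}$ into consecutive intervals each of size at most $m$ such that $A_{ij}=0$ whenever $i,j$ lie in different intervals. If $Q''_L$ is non-trivial (its dimension $\ell-\mathrm{rank}A-\mathrm{rank}(B(I-F_A))$ is positive), then $d_Z(Q''_L)\le m$.
   Context: $F=\mathbb F_q$ is a finite field. For $H_X,H_Z$ with $n$ columns and $H_XH_Z^T=0$, $\mathrm{CSS}(H_X,H_Z)$ has dimension $n-\mathrm{rank}H_X-\mathrm{rank}H_Z$ and $Z$-distance $d_Z=\min\{\mathrm{wgt}(c):c\in C_{H_X}^\perp\setminus C_{H_Z}\}$, with $C_H$ the row space of $H$ and $C_H^\perp$ its orthogonal complement. An idempotent associated with $A$ on the right is any $F_A$ with $F_A^2=F_A$, $\mathrm{rank}F_A=\mathrm{rank}A$, $AF_A=A$. Note $A(B(I-F_A))=B(A-AF_A)=0$, so $Q''_L$ is a stabilizer CSS code. *)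

From HB Require Import structures.
From mathcomp Require Import all_boot all_order all_algebra all_field.
Set Implicit Arguments. Unset Strict Implicit. Unset Printing Implicit Defensive.
Import GRing.Theory.
Local Open Scope ring_scope.

Definition wgt (F : fieldType) (n : nat) (c : 'rV[F]_n) : nat :=
  #|[set j : 'I_n | c 0 j != 0]|.

Definition in_dual (F : fieldType) (r n : nat) (H : 'M[F]_(r, n)) (c : 'rV[F]_n) : bool :=
  H *m c^T == 0.
Definition in_rowspace (F : fieldType) (r n : nat) (H : 'M[F]_(r, n)) (c : 'rV[F]_n) : bool :=
  (c <= H)%MS.

Definition css_dim (F : fieldType) (r1 r2 n : nat)
  (HX : 'M[F]_(r1, n)) (HZ : 'M[F]_(r2, n)) : int :=
  (n%:Z - (\rank HX)%:Z - (\rank HZ)%:Z)%R.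

(* Z-distance: min weight over C_HX^perp \ C_HZ ; n.+1 (an "infinity" exceeding
   every weight) if that set is empty. *)
Definition dZ (F : finFieldType) (r1 r2 n : nat)
  (HX : 'M[F]_(r1, n)) (HZ : 'M[F]_(r2, n)) : nat :=
  \big[minn/n.+1]_(c : 'rV[F]_n | in_dual HX c && ~~ in_rowspace HZ c) wgt c.

Definition idem_assoc (F : fieldType) (l : nat) (A FA : 'M[F]_l) : Prop :=
  [/\ FA *m FA = FA, \rank FA = \rank A & A *m FA = A].

Definition block_diag_intervals (F : fieldType) (l m : nat) (A : 'M[F]_l) : Prop :=
  exists P : {set {set 'I_l}},
    [/\ partition P [set: 'I_l],
        (forall S, S \in P -> forall i j k : 'I_l,
             i \in S -> k \in S -> (i <= j <= k)%N -> j \in S),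
        (forall S, S \in P -> (#|S| <= m)%N) &
        (forall i j : 'I_l, pblock P i != pblock P j -> A i j = 0)].

From HB Require Import structures.
From mathcomp Require Import all_boot all_order all_algebra all_field.
From mathcomp Require Import zify.
Import Order.TTheory GRing.Theory.
Local Open Scope ring_scope.

(* Write Z = (B (I - F_A))^T and suppose d_Z(CSS(A, Z)) > m.
   A row vector c is in the dual of A iff c A^T = 0, i.e. iff c lies in the
   left kernel of A^T.  Every such c of weight at most m must then lie in
   the row space of Z, since otherwise it would witness d_Z <= m.
   Now A^T is block diagonal for a partition P of the indices into blocks of
   size at most m, so the diagonal 0/1 projections D_S onto the blocks S of
   P commute with A^T and sum to the identity.  Hence every kernel vector c
   is the sum of the kernel vectors c D_S, each of weight at most m; so the
   whole kernel, of dimension l - rank A, sits inside the row space of Z,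
   forcing l - rank A <= rank Z, i.e. a non-positive code dimension. *)

Section BlockProjection.
Context {F : fieldType} {l : nat} {P : {set {set 'I_l}}}.
Hypothesis partP : partition P [set: 'I_l].

Definition block_proj (S : {set 'I_l}) : 'M[F]_l :=
  diag_mx (\row_j (j \in S)%:R).

Lemma sum_block_proj : \sum_(S in P) block_proj S = 1%:M.
Proof.
move: partP => /and3P [/eqP cover_all trivP _].
apply/matrixP => i k; rewrite summxE !mxE.
under eq_bigr do rewrite !mxE.
rewrite sumrMnl; congr (_ *+ _).
have iP : i \in cover P by rewrite cover_all inE.
rewrite (bigD1 (pblock P i)) ?pblock_mem //= mem_pblock iP big1 ?addr0 //.
move=> S /andP [SP neS]; case iS: (i \in S) => //.
by rewrite (def_pblock trivP SP iS) eqxx in neS.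
Qed.

Lemma wgt_block_proj (c : 'rV[F]_l) (S : {set 'I_l}) :
  (wgt (c *m block_proj S) <= #|S|)%N.
Proof.
apply: subset_leq_card; apply/subsetP => j.
by rewrite inE mul_mx_diag !mxE; case: (j \in S); rewrite ?mulr0 ?eqxx.
Qed.

Lemma block_proj_commute (M : 'M[F]_l) (S : {set 'I_l}) :
  (forall i j, pblock P i != pblock P j -> M i j = 0) ->
  S \in P -> block_proj S *m M = M *m block_proj S.
Proof.
move: partP => /and3P [/eqP cover_all trivP _] blockM SP.
apply/matrixP => i k; rewrite mul_mx_diag mul_diag_mx !mxE.
have [same_block | diff_block] := eqVneq (pblock P i) (pblock P k);
  last by rewrite blockM ?mul0r ?mulr0 // eq_sym.
suff -> : (k \in S) = (i \in S) by rewrite mulrC.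
have in_own_block (x : 'I_l) : x \in pblock P x by rewrite mem_pblock cover_all inE.
apply/idP/idP => inS; rewrite -(def_pblock trivP SP inS).
  by rewrite -same_block.
by rewrite same_block.
Qed.

Lemma kermx_sub_of_light_kernel {r m : nat} {M : 'M[F]_l} {V : 'M[F]_(r, l)} :
  (forall i j, pblock P i != pblock P j -> M i j = 0) ->
  (forall S, S \in P -> (#|S| <= m)%N) ->
  (forall c : 'rV_l, c *m M = 0 -> (wgt c <= m)%N -> (c <= V)%MS) ->
  (kermx M <= V)%MS.
Proof.
move=> blockM small light; apply/row_subP => r0.
set c := row r0 _; have cM : c *m M = 0 by apply/sub_kermxP; rewrite row_sub.
rewrite -[c]mulmx1 -sum_block_proj mulmx_sumr; apply/summx_sub => S SP.
apply: light; first by rewrite -mulmxA block_proj_commute // mulmxA cM mul0mx.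
exact: leq_trans (wgt_block_proj c S) (small S SP).
Qed.

End BlockProjection.

Lemma dZ_le_wgt {F : finFieldType} {r1 r2 n : nat}
    {HX : 'M[F]_(r1, n)} {HZ : 'M[F]_(r2, n)} {c : 'rV[F]_n} :
  in_dual HX c -> ~~ in_rowspace HZ c -> (dZ HX HZ <= wgt c)%N.
Proof.
move=> dual_c out_c.
have witness : in_dual HX c && ~~ in_rowspace HZ c by rewrite dual_c.
exact: (@bigmin_le_cond _ _ _ n.+1 c
  (fun c' => in_dual HX c' && ~~ in_rowspace HZ c') (@wgt F n) witness).
Qed.

Lemma in_dualE {F : fieldType} {r n : nat} {HX : 'M[F]_(r, n)} {c : 'rV[F]_n} :
  in_dual HX c = (c *m HX^T == 0).
Proof. by rewrite /in_dual -(inj_eq trmx_inj) trmx_mul trmxK trmx0. Qed.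

Lemma css_dim_pos_kernel {F : fieldType} {r1 r2 n : nat}
    {HX : 'M[F]_(r1, n)} {HZ : 'M[F]_(r2, n)} :
  (0 < css_dim HX HZ)%R -> ~~ (kermx HX^T <= HZ)%MS.
Proof.
rewrite /css_dim => dim_pos; apply/negP => /mxrankS.
rewrite mxrank_ker mxrank_tr; move: dim_pos.
have := rank_leq_col HX.
lia.
Qed.

Theorem mainTheorem5 (F : finFieldType) (l m : nat) (A B FA : 'M[F]_l) :
  A *m B = B *m A ->
  idem_assoc A FA ->
  block_diag_intervals m A ->
  (0 < css_dim A (B *m (1%:M - FA))^T)%R ->
  (dZ A (B *m (1%:M - FA))^T <= m)%N.
Proof.
move=> _ _ [P [partP _ small blockA]] dim_pos.
set HZ := (B *m (1%:M - FA))^T.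
rewrite leqNgt; apply/negP => dZ_gt_m.
have light : forall c : 'rV_l, c *m A^T = 0 -> (wgt c <= m)%N -> (c <= HZ)%MS.
  move=> c cA wc; apply/negPn/negP => out_c.
  have dual_c : in_dual A c by rewrite in_dualE cA.
  by have := leq_trans (dZ_le_wgt dual_c out_c) wc; rewrite leqNgt dZ_gt_m.
have blockAT : forall i j, pblock P i != pblock P j -> A^T i j = 0.
  by move=> i j ne; rewrite mxE blockA // eq_sym.
have kernel_in_HZ := kermx_sub_of_light_kernel partP blockAT small light.
by move: (css_dim_pos_kernel dim_pos); rewrite kernel_in_HZ.
Qed.
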